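(* $C_3(82) = 7$.
   Context: For positive integers $m, r$, $C_m(r)$ is the minimum odd positive integer $n$ such that there exist vectors $v_1, \ldots, v_n \in \mathbb{Z}^m$ (not necessarily distinct) with $|v_i| = \sqrt{r}$ (Euclidean norm) for every $i$ and $v_1 + \cdots + v_n = \mathbf{0}$; if no such odd $n$ exists, $C_m(r) = 0$. *)

From mathcomp Require Import all_boot all_order all_algebra.
From Stdlib Require Import ClassicalEpsilon.
Set Implicit Arguments. Unset Strict Implicit. Unset Printing Implicit Defensive.
Import GRing.Theory Num.Theory.
Local Open Scope ring_scope.

Definition sqnorm (m : nat) (v : 'rV[int]_m) : int := \sum_(i < m) v 0 i ^+ 2.

Definition balanced (m r n : nat) : Prop :=
  exists v : 'I_n -> 'rV[int]_m,
    (forall i, sqnorm (v i) = r%:Z) /\ \sum_(i < n) v i = 0.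

Definition oddbal (m r n : nat) : Prop := odd n /\ balanced m r n.

Definition oddbalb (m r : nat) (n : nat) : bool :=
  if excluded_middle_informative (oddbal m r n) then true else false.

Definition C (m r : nat) : nat :=
  match excluded_middle_informative (exists n, oddbalb m r n) with
  | left h => ex_minn h
  | right _ => 0%N
  end.

(* The lattice points of norm sqrt 82 in Z^3 are the 48 signed permutations
   of (9, 1, 0) and (8, 3, 3).  An additive code Z^3 -> Z turns a zero-sum
   family of k + l of them into codes x_1, ..., x_k, y_1, ..., y_l with
   x_1 + ... + x_k = -(y_1 + ... + y_l); a meet-in-the-middle computation,
   looking up the negated k-fold sums in the set of l-fold sums, rules this
   out for (k, l) = (1, 0), (1, 2) and (3, 2), i.e. for 1, 3 and 5 vectors.
   Seven vectors summing to zero are exhibited explicitly. *)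

From Stdlib Require Import BinInt ClassicalEpsilon MSetAVL OrdersEx.
From mathcomp Require Import all_boot all_order all_algebra zify ssrZ.
Set Implicit Arguments.
Unset Strict Implicit.
Unset Printing Implicit Defensive.
Import GRing.Theory Num.Theory.

Local Open Scope ring_scope.

Lemma oddbalbP m r n : reflect (oddbal m r n) (oddbalb m r n).
Proof. by rewrite /oddbalb; case: excluded_middle_informative => h; constructor. Qed.

Lemma C_eq m r n : oddbal m r n ->
  (forall k, (k < n)%N -> odd k -> ~ balanced m r k) -> C m r = n.
Proof.
move=> bal_n no_smaller; rewrite /C.
case: excluded_middle_informative => [ex|[]]; last by exists n; apply/oddbalbP.
case: ex_minnP => k /oddbalbP [odd_k bal_k] min_k.
apply/eqP; rewrite eqn_leq min_k; last exact/oddbalbP.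
by rewrite leqNgt; apply/negP => lt_kn; exact: no_smaller lt_kn odd_k bal_k.
Qed.

Module ZS := MSetAVL.Make Z_as_OT.

Definition set_of (s : seq Z) : ZS.t := foldr ZS.add ZS.empty s.

Lemma mem_set_of s x : ZS.mem x (set_of s) = (x \in s).
Proof.
elim: s => [|y s IHs] //=; rewrite in_cons -IHs; apply/idP/idP.
  by move/ZS.mem_spec/ZS.add_spec => [->|/ZS.mem_spec ->]; rewrite ?eqxx ?orbT.
by case/orP => [/eqP ->|/ZS.mem_spec x_s]; apply/ZS.mem_spec/ZS.add_spec; [left|right].
Qed.

Fixpoint sums (k : nat) (T : seq Z) : seq Z :=
  if k is k'.+1 then [seq a + s | a <- T, s <- sums k' T] else [:: 0].

Lemma mem_sums k T (f : 'I_k -> Z) : (forall i, f i \in T) -> \sum_i f i \in sums k T.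
Proof.
elim: k f => [|k IHk] f fT; first by rewrite big_ord0 mem_seq1.
by rewrite big_ord_recl; apply: (allpairs_f +%R); [|apply: IHk => i].
Qed.

(* Binding the set first makes call-by-value evaluation build it only once. *)
Definition opp_disjoint (s t : seq Z) : bool :=
  let S := set_of t in all (fun x => ~~ ZS.mem (- x) S) s.

Lemma opp_disjointP s t x y : opp_disjoint s t -> x \in s -> y \in t -> x + y != 0.
Proof.
move=> /allP dis x_s y_t; apply/negP; rewrite addrC addr_eq0 => /eqP y_opp.
by move: (dis x x_s); rewrite mem_set_of -y_opp y_t.
Qed.

Lemma sum_split_neq0 k l T (f : 'I_(k + l) -> Z) :
  opp_disjoint (sums k T) (sums l T) -> (forall i, f i \in T) -> \sum_i f i != 0.
Proof.
move=> dis fT; rewrite big_split_ord.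
by apply: opp_disjointP dis _ _; apply: mem_sums.
Qed.

Lemma sum3 (R : nmodType) (F : 'I_3 -> R) : \sum_(j < 3) F j = F 0 + F 1 + F 2.
Proof.
rewrite !big_ord_recl big_ord0 addr0 addrA.
by congr (F _ + F _ + F _); apply: val_inj.
Qed.

Lemma sqnorm3 (v : 'rV[int]_3) : sqnorm v = v 0 0 ^+ 2 + v 0 1 ^+ 2 + v 0 2 ^+ 2.
Proof. exact: sum3. Qed.

(* Any integer weights would be sound; 1, 91 and 91^2 make [code] injective
   on sums of at most five vectors of norm sqrt 82 (whose coordinates are
   less than 46 in absolute value), which is what lets the checks succeed. *)
Definition code (v : 'rV[int]_3) : Z := Z_of_int (v 0 0 + 91 * v 0 1 + 8281 * v 0 2).

Lemma code_sum n (v : 'I_n -> 'rV[int]_3) : code (\sum_i v i) = \sum_i code (v i).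
Proof. by rewrite /code -rmorph_sum !summxE !big_split /= -!mulr_sumr. Qed.

Section SphereCodes.
Local Open Scope Z_scope.

Definition box (k : Z) : seq Z := [seq Z.of_nat i - k | i <- iota 0 (Z.to_nat (2 * k + 1))].

Definition cube (k : Z) : seq (Z * Z * Z) :=
  [seq (ab, c) | ab <- [seq (a, b) | a <- box k, b <- box k], c <- box k].

Definition sqnormZ (t : Z * Z * Z) : Z := let: (a, b, c) := t in a * a + b * b + c * c.

Definition codeZ (t : Z * Z * Z) : Z := let: (a, b, c) := t in a + 91 * b + 8281 * c.

Definition sphere_codes (r : nat) : seq Z :=
  [seq codeZ t | t <- cube (Z.sqrt (Z.of_nat r)) & sqnormZ t == Z.of_nat r].

Lemma mem_box k a : - k <= a <= k -> a \in box k.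
Proof.
move=> a_bd; apply/mapP; exists (Z.to_nat (a + k)); last by lia.
by rewrite mem_iota; lia.
Qed.

Lemma abs_le_sqrt (a r : Z) : a * a <= r -> - Z.sqrt r <= a <= Z.sqrt r.
Proof.
move=> a2_le; have r_ge0 : 0 <= r by nia.
have := Z.sqrt_spec r r_ge0; have := Z.sqrt_nonneg r; nia.
Qed.

End SphereCodes.

Lemma coord_sqr_le_sqnorm m (v : 'rV[int]_m) j : v 0 j ^+ 2 <= sqnorm v.
Proof. by rewrite /sqnorm (bigD1 j) //= lerDl sumr_ge0 // => i _; exact: sqr_ge0. Qed.

Lemma code_mem_sphere_codes r v : sqnorm v = r%:Z -> code v \in sphere_codes r.
Proof.
move=> norm_v; have in_box j : Z_of_int (v 0 j) \in box (Z.sqrt (Z.of_nat r)).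
  apply/mem_box/abs_le_sqrt; have := coord_sqr_le_sqnorm v j; rewrite norm_v expr2; lia.
apply/mapP; exists (Z_of_int (v 0 0), Z_of_int (v 0 1), Z_of_int (v 0 2)); last first.
  by rewrite /code /codeZ; cbv beta iota; lia.
rewrite mem_filter !allpairs_f // andbT /sqnormZ; cbv beta iota.
by move: norm_v; rewrite sqnorm3 !expr2 => norm_v; apply/eqP; lia.
Qed.

Lemma not_balanced_sphere r k l :
  opp_disjoint (sums k (sphere_codes r)) (sums l (sphere_codes r)) -> ~ balanced 3 r (k + l).
Proof.
move=> dis [v [norm_v sum_v]].
have := sum_split_neq0 dis (fun i => code_mem_sphere_codes (norm_v i)).
by rewrite -code_sum sum_v /code !mxE !mulr0 !addr0 rmorph0 eqxx.
Qed.

Definition witness7 (i : 'I_7) : 'rV[int]_3 :=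
  \row_j (nth [::] [:: [:: -9; -1; 0]; [:: -9; -1; 0]; [:: -9; 1; 0]; [:: 3; -8; -3];
                      [:: 8; 3; -3]; [:: 8; 3; 3]; [:: 8; 3; 3]] i)`_j.

Lemma balanced_82_7 : balanced 3 82 7.
Proof.
exists witness7; split.
  by case=> [[|[|[|[|[|[|[|//]]]]]]] ?]; rewrite sqnorm3 !mxE; reflexivity.
apply/matrixP => i j; rewrite summxE !big_ord_recl big_ord0 !mxE.
by case: j => [[|[|[|//]]] ?]; reflexivity.
Qed.

Theorem theorem5 : C 3 82 = 7%N.
Proof.
apply: C_eq; first by split; [|exact: balanced_82_7].
case=> [|[|[|[|[|[|[|k]]]]]]] //= _ _.
- by apply: (@not_balanced_sphere 82 1 0); vm_compute.
- by apply: (@not_balanced_sphere 82 1 2); vm_compute.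
- by apply: (@not_balanced_sphere 82 3 2); vm_compute.
Qed.
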